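(* Let $Q$ be a compact metric space, $Q_0\subset Q$ open, $Q_1=Q\setminus Q_0$, $p_0:Q_0\to[0,+\infty)$ lower semicontinuous, $c:Q\times Q\to[0,+\infty)$ continuous with $c(x,x)=0$ for all $x$, and $f$ a nonnegative Radon measure on $Q$ of positive mass. Let $\mathcal A=\{p:Q\to\mathbb{R}\ :\ p=p_0\text{ on }Q_0,\ p\text{ lower semicontinuous on }Q\}$. Let $p\in\mathcal A$ with $p\ge0$, set $w=w_p$, define $\tilde u(y)=\inf_{x\in Q}\{c(x,y)-w(x)\}$ for $y\in Q_1$, and $\tilde p=p_0$ on $Q_0$, $\tilde p=-\tilde u$ on $Q_1$. Then (i) $v_{\tilde p}=v_p$, $\tilde p\le p$ on $Q_1$, and $\tilde p\ge0$ on $Q$; (ii) $T_p(x)\cap Q_1\subset T_{\tilde p}(x)\cap Q_1$ for all $x\in\Omega_1(p)$; (iii) $\Omega_1(p)\subset\Omega_1(\tilde p)=\{w\le v_0\}$; (iv) $T_{\tilde p}(x)\cap Q_1=\partial^{1,c}w(x)$ for all $x\in\Omega_1(\tilde p)$; and consequently $\Pi(\tilde p)\ge\Pi(p)$ and $$\Pi(\tilde p)=\int_{\{w\le v_0\}}\Big(w(x)-\min_{y\in\partial^{1,c}w(x)}c(x,y)\Big)\,df(x).$$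
   Context: For $p\in\mathcal A$ and $x\in Q$: $v_p(x)=\min_{y\in Q}\{c(x,y)+p(y)\}$, $T_p(x)=\{y\in Q: c(x,y)+p(y)=v_p(x)\}$, $v_0(x)=\inf_{y\in Q_0}\{c(x,y)+p_0(y)\}$, $w_p(x)=\inf_{y\in Q_1}\{c(x,y)+p(y)\}$ (so $v_p=\min(v_0,w_p)$). $\Omega_1(p)=\{x\in Q: T_p(x)\cap Q_1\ne\emptyset\}$. The profit is $\Pi(p)=\int_{\Omega_1(p)}\big(\max_{y\in T_p(x)\cap Q_1}p(y)\big)\,df(x)$. For a function $w$ of the form $w(x)=\inf_{y\in Q_1}\{c(x,y)-u(y)\}$ with $u:Q_1\to\mathbb{R}$ bounded above (called $(Q_1,c)$-concave), $w^c(y)=\inf_{x\in Q}\{c(x,y)-w(x)\}$ for $y\in Q_1$, and $\partial^{1,c}w(x)=\{y\in Q_1: w(x)+w^c(y)=c(x,y)\}$. *)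

From HB Require Import structures.
From mathcomp Require Import all_boot all_order all_algebra.
From mathcomp Require Import all_classical all_reals all_analysis.
Set Implicit Arguments. Unset Strict Implicit. Unset Printing Implicit Defensive.
Import Order.TTheory GRing.Theory Num.Theory.
Local Open Scope classical_set_scope.
Local Open Scope ring_scope.
Local Open Scope ereal_scope.

Notation Borel T := (g_sigma_algebraType (@open T)).

Section Defs.
Context {R : realType} {T : pseudoPMetricType R}.
Variables (Q0 : set T) (c : T -> T -> R) (p0 : T -> R).

Definition Q1 : set T := ~` Q0.

Definition lsc_on (D : set T) (g : T -> R) : Prop :=
  forall x, D x -> forall a : R, (a < g x)%R ->
    exists2 V, nbhs x V & forall y, V y -> D y -> (a < g y)%R.

Definition admissible (p : T -> R) : Prop :=
  (forall y, Q0 y -> p y = p0 y) /\ lower_semicontinuous (fun x => (p x)%:E).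

Definition vp (p : T -> R) (x : T) : \bar R :=
  ereal_inf [set ((c x y + p y)%R)%:E | y in [set: T]].

Definition Tp (p : T -> R) (x : T) : set T :=
  [set y | ((c x y + p y)%R)%:E = vp p x].

Definition v0 (x : T) : \bar R :=
  ereal_inf [set ((c x y + p0 y)%R)%:E | y in Q0].

Definition wp (p : T -> R) (x : T) : \bar R :=
  ereal_inf [set ((c x y + p y)%R)%:E | y in Q1].

Definition Omega1 (p : T -> R) : set T :=
  [set x | Tp p x `&` Q1 !=set0].

Definition ctrans (w : T -> \bar R) (y : T) : \bar R :=
  ereal_inf [set (c x y)%:E - w x | x in [set: T]].

Definition csubdiff1 (w : T -> \bar R) (x : T) : set T :=
  [set y | Q1 y /\ w x + ctrans w y = (c x y)%:E].

(* ptilde = p0 on Q0, - u~ on Q1, with u~ = (w_p)^c (finite on Q1) *)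
Definition ptilde (p : T -> R) (y : T) : R :=
  if `[< Q0 y >] then p0 y else (- fine (ctrans (wp p) y))%R.


Definition maxprice (p : T -> R) (x : T) : \bar R :=
  ereal_sup [set (p y)%:E | y in Tp p x `&` Q1].

Definition Profit (f : {measure set (Borel T) -> \bar R}) (p : T -> R) : \bar R :=
  \int[f]_(x in (Omega1 p : set (Borel T))) maxprice p x.

End Defs.

From HB Require Import structures.
From mathcomp Require Import all_boot all_order all_algebra.
From mathcomp Require Import all_classical all_reals all_analysis.
From mathcomp Require Import ring lra.
Import Order.TTheory GRing.Theory Num.Theory.
Local Open Scope classical_set_scope.
Local Open Scope ring_scope.

(* Write w = w_p and u = w^c, so that pt := ptilde = -u on Q1.  By definition
   of u, c(x,y) + pt(y) >= w(x) for all x and all y in Q1, while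
   w(x) <= c(x,y) + p(y) gives pt <= p: lowering p to pt leaves w, and hence v,
   unchanged.  A y in Q1 that is optimal for p at x realises
   w(x) = c(x,y) + p(y), which squeezes pt(y) = p(y); so optimal purchases in
   Q1 stay optimal at the same price and the profit cannot decrease.  As Q1 is
   compact and p lower semicontinuous, w(x) is attained on Q1, and then also
   for pt, whence Omega_1(pt) = {w <= v0}.  There y in Q1 is optimal for pt iff
   w(x) + u(y) = c(x,y), i.e. y is in the c-superdifferential of w at x, and
   then pt(y) = w(x) - c(x,y). *)

Lemma lsc_compact_min {R : realType} {T : pseudoPMetricType R} {K : set T}
    {g : T -> R} :
  compact K -> K !=set0 -> lower_semicontinuous (fun y => (g y)%:E) ->
  exists2 y, K y & forall z, K z -> g y <= g z.
Proof.
move=> cK [z0 Kz0] lg.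
pose D := [set a : R | exists z, K z /\ g z < a].
pose S a := K `&` [set y | g y < a].
have D_gz0 : D (g z0 + 1) by exists z0; split => //; rewrite ltrDl.
have FF : Filter (filter_from D S).
  apply: filter_from_filter; first by exists (g z0 + 1).
  move=> a b Da Db; have [ab|ba] := leP a b.
    by exists a => // y [Ky gy]; split; split => //; rewrite /= (lt_le_trans gy ab).
  by exists b => // y [Ky gy]; split; split => //; rewrite /= (lt_trans gy ba).
have PF : ProperFilter (filter_from D S).
  by apply: filter_from_proper => a [z [Kz gz]]; exists z.
have [|x [Kx clx]] := cK _ PF; first by exists (g z0 + 1) => // y [].
have gx_le a : D a -> g x <= a.
  move=> Da; rewrite leNgt; apply/negP => agx.
  have [V nV Vg] := lg x a (agx : (a%:E < (g x)%:E)%E).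
  have [y [[_ gya] Vy]] := clx (S a) V (ex_intro2 _ _ a Da (@subset_refl _ _)) nV.
  by have := Vg y Vy; rewrite lte_fin => /(lt_trans gya); rewrite ltxx.
exists x => // z Kz; apply/ler_addgt0Pr => e e0; apply: gx_le.
by exists z; split => //; rewrite ltrDl.
Qed.

Lemma lower_semicontinuousD_continuous {R : realType} {T : pseudoPMetricType R}
    {h g : T -> R} :
  continuous (h : T -> R^o) -> lower_semicontinuous (fun y => (g y)%:E) ->
  lower_semicontinuous (fun y => (h y + g y)%:E).
Proof.
move=> ch lg y0 a; rewrite lte_fin => ay0.
pose e := (h y0 + g y0 - a) / 2.
have e0 : 0 < e by rewrite divr_gt0 // subr_gt0.
have ge : ((g y0 - e)%:E < (g y0)%:E)%E by rewrite lte_fin gtrBl.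
have [V nV Vg] := lg y0 _ ge.
have hn : \forall y \near y0, h y0 - e < h y.
  by move: (ch y0) => /cvgr_gt; apply; rewrite gtrBl.
exists (V `&` [set y | h y0 - e < h y]); first exact: filterI.
move=> y [Vy hy]; have := Vg y Vy; rewrite !lte_fin => gy.
have -> : a = (h y0 - e) + (g y0 - e) by rewrite /e; field.
exact: ltrD.
Qed.

Lemma continuous_curry_r {R : realType} {T : pseudoPMetricType R}
    {F : T -> T -> R} x :
  continuous (fun z : T * T => (F z.1 z.2 : R^o)) -> continuous (F x : T -> R^o).
Proof.
move=> cF y; apply: (cvg_comp (fun y => (x, y)) _ _ (cF (x, y))).
by apply: cvg_pair; [exact: cvg_cst|exact: cvg_id].
Qed.

Lemma ereal_sup_subl (R : realType) (a : R) (B : set (\bar R)) :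
  ereal_sup [set (a%:E - z)%E | z in B] = (a%:E - ereal_inf B)%E.
Proof.
rewrite ereal_infEN oppeK; apply/le_anti/andP; split.
  apply: ge_ereal_sup => _ [z Bz <-]; apply: leeD2l.
  by apply: ereal_sup_ubound; exists z.
rewrite -leeBrDl //; apply: ge_ereal_sup => _ [z Bz <-].
by rewrite leeBrDl //; apply: ereal_sup_ubound; exists z.
Qed.

(* No measurability is needed: a nonnegative integral is the supremum of the
   integrals of simple minorants. *)
Lemma ge0_le_integral_subset d (X : measurableType d) (R : realType)
    (mu : {measure set X -> \bar R}) (D E : set X) (g h : X -> \bar R) :
  D `<=` E -> (forall x, D x -> 0 <= g x)%E -> (forall x, E x -> 0 <= h x)%E ->
  (forall x, D x -> g x <= h x)%E ->
  (\int[mu]_(x in D) g x <= \int[mu]_(x in E) h x)%E.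
Proof.
move=> DE g0 h0 gh; rewrite !ge0_integralE //.
apply: ereal_sup_le => _ [s sg <-]; exists s => // x; apply: le_trans (sg x) _.
rewrite /patch; case: ifPn => [/set_mem Dx|_]; last exact: erestrict_ge0.
by rewrite ifT ?gh //; apply/mem_set/DE.
Qed.

Section ptilde.
Context {R : realType} {T : pseudoPMetricType R} {Q0 : set T}.
Context {c : T -> T -> R} {p0 p : T -> R}.
Hypothesis pQ0 : forall y, Q0 y -> p y = p0 y.
Hypothesis p_ge0 : forall y, 0 <= p y.
Hypothesis c_ge0 : forall x y, 0 <= c x y.
Hypothesis c_diag : forall x, c x x = 0.

Local Notation w := (wp Q0 c p).
Local Notation pt := (ptilde Q0 c p0 p).
Local Notation Q1 := (Q1 Q0).
Local Notation v0 := (v0 Q0 c p0).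

Lemma wp_le x {y} : Q1 y -> (w x <= (c x y + p y)%:E)%E.
Proof. by move=> Q1y; apply: ereal_inf_lbound; exists y. Qed.

Lemma wp_ge0 x : (0 <= w x)%E.
Proof. by apply: le_ereal_inf_tmp => _ [y _ <-]; rewrite lee_fin addr_ge0. Qed.

Lemma wpE x {y} : Q1 y -> w x = (fine (w x))%:E.
Proof.
move=> Q1y; rewrite fineK // ge0_fin_numE ?wp_ge0 //.
exact: le_lt_trans (wp_le x Q1y) (ltry _).
Qed.

Lemma fine_wp_le x {y} : Q1 y -> fine (w x) <= c x y + p y.
Proof. by move=> Q1y; rewrite -lee_fin -(wpE x Q1y) wp_le. Qed.

Lemma fine_wp_ge0 x {y} : Q1 y -> 0 <= fine (w x).
Proof. by move=> Q1y; rewrite -lee_fin -(wpE x Q1y) wp_ge0. Qed.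

Lemma ctrans_wp_ge {y} : Q1 y -> ((- p y)%:E <= ctrans c w y)%E.
Proof.
move=> Q1y; apply: le_ereal_inf_tmp => _ [x _ <-].
by rewrite (wpE x Q1y) -EFinB lee_fin; have := fine_wp_le x Q1y; lra.
Qed.

Lemma ctrans_wpE {y} : Q1 y -> ctrans c w y = (- pt y)%:E.
Proof.
move=> Q1y; rewrite /ptilde asboolF // opprK fineK // fin_numElt.
apply/andP; split; first exact: lt_le_trans (ltNyr _) (ctrans_wp_ge Q1y).
apply: (@le_lt_trans _ _ ((c y y)%:E - w y)%E); last first.
  by rewrite (wpE y Q1y) -EFinB ltry.
by apply: ereal_inf_lbound; exists y.
Qed.

Lemma ptilde_Q0 y : Q0 y -> pt y = p y.
Proof. by move=> Q0y; rewrite /ptilde asboolT // pQ0. Qed.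

Lemma fine_wp_le_ptilde x {y} : Q1 y -> fine (w x) <= c x y + pt y.
Proof.
move=> Q1y; have : (ctrans c w y <= (c x y)%:E - w x)%E.
  by apply: ereal_inf_lbound; exists x.
by rewrite (ctrans_wpE Q1y) (wpE x Q1y) -EFinB lee_fin; lra.
Qed.

Lemma ptilde_le y : pt y <= p y.
Proof.
have [/ptilde_Q0 -> //|Q1y] := pselect (Q0 y).
by have := ctrans_wp_ge Q1y; rewrite (ctrans_wpE Q1y) lee_fin lerN2.
Qed.

Lemma ptilde_ge0 y : 0 <= pt y.
Proof.
have [Q0y|Q1y] := pselect (Q0 y); first by rewrite ptilde_Q0.
have := fine_wp_le_ptilde y Q1y; rewrite c_diag add0r.
exact: le_trans (fine_wp_ge0 y Q1y).
Qed.

Lemma vp_le_wp x : (vp c p x <= w x)%E.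
Proof. by apply: ereal_inf_le_tmp => _ [y _ <-]; exists y. Qed.

Lemma vp_le_v0 x : (vp c p x <= v0 x)%E.
Proof.
by apply: ereal_inf_le_tmp => _ [y Q0y <-]; exists y => //; rewrite pQ0.
Qed.

Lemma vp_ptilde x : vp c pt x = vp c p x.
Proof.
apply/le_anti/andP; split; apply: le_ereal_inf_tmp => _ [y _ <-].
  apply: (@le_trans _ _ (c x y + pt y)%:E); first by apply: ereal_inf_lbound; exists y.
  by rewrite lee_fin lerD2l ptilde_le.
have [Q0y|Q1y] := pselect (Q0 y).
  by rewrite ptilde_Q0 //; apply: ereal_inf_lbound; exists y.
by apply: le_trans (vp_le_wp x) _; rewrite (wpE x Q1y) lee_fin fine_wp_le_ptilde.
Qed.

Lemma vp_wp {x} : (w x <= v0 x)%E -> vp c p x = w x.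
Proof.
move=> wv0; apply/le_anti; rewrite vp_le_wp /=.
apply: le_ereal_inf_tmp => _ [y _ <-].
have [Q0y|Q1y] := pselect (Q0 y); last exact: wp_le.
by apply: le_trans wv0 _; apply: ereal_inf_lbound; exists y => //; rewrite pQ0.
Qed.

Lemma Tp_Q1_ptilde {x y} : Tp c p x y -> Q1 y -> Tp c pt x y /\ pt y = p y.
Proof.
rewrite /Tp /= => Txy Q1y.
have e : c x y + pt y = c x y + p y.
  apply/le_anti/andP; split; first by rewrite lerD2l ptilde_le.
  rewrite -lee_fin Txy; apply: le_trans (vp_le_wp x) _.
  by rewrite (wpE x Q1y) lee_fin fine_wp_le_ptilde.
by split; [rewrite vp_ptilde e|apply: (addrI _ e)].
Qed.

Lemma Omega1_ptilde : Omega1 Q0 c p `<=` Omega1 Q0 c pt.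
Proof.
by move=> x [y [Txy Q1y]]; exists y; split => //; exact: (Tp_Q1_ptilde Txy Q1y).1.
Qed.

Lemma Q1_neq0_wp_le_v0 {x} : (w x <= v0 x)%E -> Q1 !=set0.
Proof.
move=> wv0; have [Q0x|Q1x] := pselect (Q0 x); last by exists x.
have : (w x < +oo)%E.
  apply: le_lt_trans wv0 (le_lt_trans _ (ltry (c x x + p0 x))).
  by apply: ereal_inf_lbound; exists x.
by move=> /ereal_inf_lt [_ [y Q1y _] _]; exists y.
Qed.

Lemma Tp_ptilde_csubdiff1 {x} :
  (w x <= v0 x)%E -> Tp c pt x `&` Q1 = csubdiff1 Q0 c w x.
Proof.
move=> wv0; apply/seteqP; split => y [].
  move=> Txy Q1y; split => //; rewrite (ctrans_wpE Q1y) (wpE x Q1y) -EFinD.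
  move: Txy; rewrite /Tp /= vp_ptilde (vp_wp wv0) (wpE x Q1y) => -[<-].
  by rewrite addrK.
move=> Q1y; rewrite (ctrans_wpE Q1y) (wpE x Q1y) -EFinD => -[e]; split => //.
by rewrite /Tp /= vp_ptilde (vp_wp wv0) (wpE x Q1y) -e subrK.
Qed.

Lemma maxprice_ge0 (q : T -> R) x :
  (forall y, 0 <= q y) -> Omega1 Q0 c q x -> (0 <= maxprice Q0 c q x)%E.
Proof.
move=> q0 [y [Txy Q1y]]; apply: (@le_trans _ _ (q y)%:E); first by rewrite lee_fin.
by apply: ereal_sup_ubound; exists y.
Qed.

Lemma maxprice_le_ptilde x : (maxprice Q0 c p x <= maxprice Q0 c pt x)%E.
Proof.
apply: ereal_sup_le => _ [y [Txy Q1y] <-].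
by have [Tpt <-] := Tp_Q1_ptilde Txy Q1y; exists y.
Qed.

Lemma Profit_le_ptilde (f : {measure set Borel T -> \bar R}) :
  (Profit Q0 c f p <= Profit Q0 c f pt)%E.
Proof.
apply: ge0_le_integral_subset; [exact: Omega1_ptilde| | |].
- by move=> x; apply: maxprice_ge0.
- by move=> x; apply: maxprice_ge0 ptilde_ge0.
- by move=> x _; exact: maxprice_le_ptilde.
Qed.

Lemma maxprice_ptilde {x} : (w x <= v0 x)%E ->
  maxprice Q0 c pt x =
    (w x - ereal_inf [set (c x y)%:E | y in csubdiff1 Q0 c w x])%E.
Proof.
move=> wv0; have [y1 Q1y1] := Q1_neq0_wp_le_v0 wv0.
rewrite /maxprice (Tp_ptilde_csubdiff1 wv0) (wpE x Q1y1) -ereal_sup_subl.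
rewrite [in RHS]image_comp; congr ereal_sup; apply: eq_imagel => y [Q1y].
rewrite (ctrans_wpE Q1y) (wpE x Q1y) -EFinD => -[e] /=.
by rewrite -EFinB -e; congr (_%:E); ring.
Qed.

Hypothesis cT : compact [set: T].
Hypothesis oQ0 : open Q0.
Hypothesis c_cont : continuous (fun z : T * T => (c z.1 z.2 : R^o)).
Hypothesis p_lsc : lower_semicontinuous (fun x => (p x)%:E).

Lemma wp_attained x : Q1 !=set0 -> exists2 y, Q1 y & w x = (c x y + p y)%:E.
Proof.
move=> Q1_neq0.
have cQ1 : compact Q1 by apply: (subclosed_compact (open_closedC oQ0) cT).
have [y Q1y ymin] := lsc_compact_min cQ1 Q1_neq0
  (lower_semicontinuousD_continuous (continuous_curry_r x c_cont) p_lsc).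
exists y => //; apply/le_anti; rewrite wp_le //=.
by apply: le_ereal_inf_tmp => _ [z Q1z <-]; rewrite lee_fin ymin.
Qed.

Lemma Omega1_ptildeE : Omega1 Q0 c pt = [set x | (w x <= v0 x)%E].
Proof.
apply/seteqP; split => x.
  move=> [y [Txy Q1y]]; apply: le_trans (vp_le_v0 x); rewrite -vp_ptilde -Txy.
  by rewrite (wpE x Q1y) lee_fin fine_wp_le_ptilde.
move=> /= wv0; have [y Q1y wy] := wp_attained x (Q1_neq0_wp_le_v0 wv0).
exists y; split => //; rewrite /Tp /= vp_ptilde (vp_wp wv0) wy; congr (_%:E).
apply/le_anti; rewrite lerD2l ptilde_le /=.
by have := fine_wp_le_ptilde x Q1y; rewrite -lee_fin -(wpE x Q1y) wy lee_fin.
Qed.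

Lemma Profit_ptildeE (f : {measure set Borel T -> \bar R}) :
  Profit Q0 c f pt =
    (\int[f]_(x in ([set x | (w x <= v0 x)%E] : set (Borel T)))
       (w x - ereal_inf [set (c x y)%:E | y in csubdiff1 Q0 c w x]))%E.
Proof.
by rewrite /Profit Omega1_ptildeE; apply: eq_integral => x /set_mem/maxprice_ptilde.
Qed.

End ptilde.

Theorem proposition5p2 (R : realType) (T : pseudoPMetricType R)
  (hT : hausdorff_space T) (cT : compact [set: T])
  (Q0 : set T) (oQ0 : open Q0)
  (p0 : T -> R) (p0_ge0 : forall y, Q0 y -> 0 <= p0 y) (p0_lsc : lsc_on Q0 p0)
  (c : T -> T -> R) (c_ge0 : forall x y, 0 <= c x y)
  (c_cont : continuous (fun z : T * T => (c z.1 z.2 : R^o)))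
  (c_diag : forall x, c x x = 0)
  (f : {finite_measure set Borel T -> \bar R}) (f_pos : (0 < f [set: Borel T])%E)
  (p : T -> R) (pA : admissible Q0 p0 p) (p_ge0 : forall y, 0 <= p y) :
  let w := wp Q0 c p in
  let pt := ptilde Q0 c p0 p in
  (* (i) *)
  ((forall x, vp c pt x = vp c p x) /\
   (forall y, Q1 Q0 y -> pt y <= p y) /\
   (forall y, 0 <= pt y)) /\
  (* (ii) *)
  (forall x, Omega1 Q0 c p x ->
     Tp c p x `&` Q1 Q0 `<=` Tp c pt x `&` Q1 Q0) /\
  (* (iii) *)
  (Omega1 Q0 c p `<=` Omega1 Q0 c pt /\
   Omega1 Q0 c pt = [set x | (w x <= v0 Q0 c p0 x)%E]) /\
  (* (iv) *)
  (forall x, Omega1 Q0 c pt x ->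
     Tp c pt x `&` Q1 Q0 = csubdiff1 Q0 c w x) /\
  (Profit Q0 c f p <= Profit Q0 c f pt)%E /\
  Profit Q0 c f pt =
    (\int[f]_(x in ([set x | (w x <= v0 Q0 c p0 x)%E] : set (Borel T)))
       (w x - ereal_inf [set (c x y)%:E | y in csubdiff1 Q0 c w x]))%E.
Proof.
move=> w pt; have [pQ0 p_lsc] := pA.
have OmegaE := Omega1_ptildeE pQ0 p_ge0 c_ge0 cT oQ0 c_cont p_lsc.
split; [split; [|split]|].
- exact: vp_ptilde pQ0 p_ge0 c_ge0.
- by move=> y _; exact: ptilde_le pQ0 p_ge0 c_ge0 y.
- exact: ptilde_ge0 pQ0 p_ge0 c_ge0 c_diag.
split.
  move=> x _ y [Txy Q1y]; split => //.
  exact: (Tp_Q1_ptilde pQ0 p_ge0 c_ge0 Txy Q1y).1.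
split; first by split; [exact: Omega1_ptilde pQ0 p_ge0 c_ge0|].
split.
  by move=> x; rewrite OmegaE; exact: Tp_ptilde_csubdiff1 pQ0 p_ge0 c_ge0 x.
split; first exact: (Profit_le_ptilde pQ0 p_ge0 c_ge0 c_diag).
exact: (Profit_ptildeE pQ0 p_ge0 c_ge0 cT oQ0 c_cont p_lsc).
Qed.
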